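(* Let $H,A$ be as in the context and let $c\in H$ be a non-trivial central element. For $a\in A$ put $x_a=\langle a,c_{(1)}\rangle c_{(2)}-\langle a,c\rangle 1\in\ker\epsilon\subset H$. Then both $\widetilde{L_c}={\rm span}\{x_a\mid a\in A\}$ and $L_c={\rm span}\{x_a\mid a\in\ker\epsilon\subset A\}$ are stable under the quantum double action $h\triangleright x=h_{(1)}xSh_{(2)}$, $a\triangleright x=\langle a,x_{(1)}\rangle x_{(2)}-\langle a,x\rangle1$. Moreover, for $a,b\in A$ (with $a\in\ker\epsilon$ for elements of $L_c$), writing $\partial_x(b)=\langle x,b_{(1)}\rangle b_{(2)}$, $\Psi^{-1}(b\otimes x)=b_{(1)}\triangleright x\otimes b_{(2)}$, $[x,y]=x_{(1)}ySx_{(2)}$ and $\Psi(x\otimes y)=[x_{(1)},y]\otimes x_{(2)}-[x,y]\otimes1$: \[\partial_{x_a}(b)=\langle ab_{(1)},c\rangle b_{(2)}-\langle a,c\rangle b,\qquad \Psi^{-1}(b\otimes x_a)=x_{ab_{(1)}}\otimes b_{(2)},\] \[[x_a,x_b]=x_{b_{(2)}}\langle a(Sb_{(1)})b_{(3)},c\rangle-x_b\langle a,c\rangle,\qquad \Psi(x_a\otimes x_b)=x_{b_{(2)}}\otimes x_{a(Sb_{(1)})b_{(3)}}.\]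
   Context: $H,A$ are Hopf algebras over $\mathbb{C}$ with invertible antipodes, non-degenerately paired by a Hopf pairing $\langle\ ,\ \rangle$ ($\langle hg,a\rangle=\langle h,a_{(1)}\rangle\langle g,a_{(2)}\rangle$, $\langle h,ab\rangle=\langle h_{(1)},a\rangle\langle h_{(2)},b\rangle$, compatible with units, counits, antipodes); Sweedler notation. $[h,y]:=h_{(1)}ySh_{(2)}$ for $h\in H$. *)

(* Hopf algebras over a field, paired; tensors represented
   as finite lists of simple tensors, equality of tensors defined by the
   universal property of the tensor product (all bilinear/trilinear maps
   into any vector space agree). *)
From HB Require Import structures.
From mathcomp Require Import all_boot all_order all_algebra all_field.
Set Implicit Arguments. Unset Strict Implicit. Unset Printing Implicit Defensive.
Import GRing.Theory.
Local Open Scope ring_scope.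

Section Defs.
Variable K : fieldType.

Definition lin (V U : lmodType K) (f : V -> U) :=
  forall (k : K) (u v : V), f (k *: u + v) = k *: f u + f v.

Definition bilin (V W U : lmodType K) (b : V -> W -> U) :=
  (forall w, lin (fun v => b v w)) /\ (forall v, lin (b v)).

Definition trilin (V W X U : lmodType K) (b : V -> W -> X -> U) :=
  (forall w x, lin (fun v => b v w x)) /\ (forall v x, lin (fun w => b v w x))
  /\ (forall v w, lin (b v w)).

Definition teq2 (V W : lmodType K) (t1 t2 : seq (V * W)) :=
  forall (U : lmodType K) (b : V -> W -> U), bilin b ->
    \sum_(p <- t1) b p.1 p.2 = \sum_(p <- t2) b p.1 p.2.

Definition teq3 (V W X : lmodType K) (t1 t2 : seq (V * W * X)) :=
  forall (U : lmodType K) (b : V -> W -> X -> U), trilin b ->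
    \sum_(p <- t1) b p.1.1 p.1.2 p.2 = \sum_(p <- t2) b p.1.1 p.1.2 p.2.

(* A Hopf algebra structure with invertible antipode on the K-algebra H;
   cop h is a list of simple tensors representing Delta h (Sweedler). *)
Record hopf_alg (H : algType K) := HopfAlg {
  cop : H -> seq (H * H);
  eps : H -> K;
  ant : H -> H;
  cop_lin : forall (k : K) (u v : H),
    teq2 (cop (k *: u + v)) ([seq (k *: p.1, p.2) | p <- cop u] ++ cop v);
  cop_mul : forall u v : H,
    teq2 (cop (u * v)) [seq (p.1 * q.1, p.2 * q.2) | p <- cop u, q <- cop v];
  cop_one : teq2 (cop 1) [:: (1, 1)];
  coassoc : forall h : H,
    teq3 [seq (q.1, q.2, p.2) | p <- cop h, q <- cop p.1]
         [seq (p.1, q.1, q.2) | p <- cop h, q <- cop p.2];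
  eps_lin : forall (k : K) (u v : H), eps (k *: u + v) = k * eps u + eps v;
  eps_mul : forall u v : H, eps (u * v) = eps u * eps v;
  eps_one : eps 1 = 1;
  counit_l : forall h : H, \sum_(p <- cop h) eps p.1 *: p.2 = h;
  counit_r : forall h : H, \sum_(p <- cop h) eps p.2 *: p.1 = h;
  ant_lin : lin ant;
  ant_l : forall h : H, \sum_(p <- cop h) ant p.1 * p.2 = (eps h)%:A;
  ant_r : forall h : H, \sum_(p <- cop h) p.1 * ant p.2 = (eps h)%:A;
  ant_bij : bijective ant
}.

Record hopf_pairing (H A : algType K) (hH : hopf_alg H) (hA : hopf_alg A) :=
  HopfPairing {
  pair : H -> A -> K;
  pair_linl : forall (a : A) (k : K) (u v : H),
    pair (k *: u + v) a = k * pair u a + pair v a;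
  pair_linr : forall (h : H) (k : K) (a b : A),
    pair h (k *: a + b) = k * pair h a + pair h b;
  pair_mull : forall (h g : H) (a : A),
    pair (h * g) a = \sum_(p <- cop hA a) pair h p.1 * pair g p.2;
  pair_mulr : forall (h : H) (a b : A),
    pair h (a * b) = \sum_(p <- cop hH h) pair p.1 a * pair p.2 b;
  pair_onel : forall a : A, pair 1 a = eps hA a;
  pair_oner : forall h : H, pair h 1 = eps hH h;
  pair_ant : forall (h : H) (a : A), pair (ant hH h) a = pair h (ant hA a);
  nondeg_l : forall h : H, (forall a, pair h a = 0) -> h = 0;
  nondeg_r : forall a : A, (forall h, pair h a = 0) -> a = 0
}.

Variables (H A : algType K) (hH : hopf_alg H) (hA : hopf_alg A)
  (P : hopf_pairing hH hA).

(* [h, y] = h_(1) y S h_(2), also the action h |> y *)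
Definition bracket (h y : H) : H := \sum_(p <- cop hH h) p.1 * y * ant hH p.2.

Definition actA (a : A) (x : H) : H :=
  \sum_(p <- cop hH x) pair P p.1 a *: p.2 - (pair P x a)%:A.

Definition xa (c : H) (a : A) : H :=
  \sum_(p <- cop hH c) pair P p.1 a *: p.2 - (pair P c a)%:A.

Definition inspan (X : H -> Prop) (x : H) :=
  exists s : seq (K * H), (forall p, p \in s -> X p.2) /\
    x = \sum_(p <- s) p.1 *: p.2.

Definition Ltilde (c : H) := inspan (fun x => exists a : A, x = xa c a).
Definition Lc (c : H) :=
  inspan (fun x => exists a : A, eps hA a = 0 /\ x = xa c a).

Definition qd_stable (X : H -> Prop) :=
  forall x, X x -> (forall h : H, X (bracket h x)) /\ (forall a : A, X (actA a x)).

Definition dpart (x : H) (b : A) : A := \sum_(p <- cop hA b) pair P x p.1 *: p.2.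

Definition PsiInv (b : A) (x : H) : seq (H * A) :=
  [seq (actA p.1 x, p.2) | p <- cop hA b].

Definition Psi (x y : H) : seq (H * H) :=
  [seq (bracket p.1 y, p.2) | p <- cop hH x] ++ [:: (- bracket x y, 1)].

(* b_(1) (x) b_(2) (x) b_(3) = (Delta (x) id) Delta b *)
Definition cop2 (b : A) : seq (A * A * A) :=
  [seq (q.1, q.2, p.2) | p <- cop hA b, q <- cop hA p.1].

End Defs.

(* The key formula is [h, x_b] = <h, S b_(1) b_(3)> x_(b_(2)) for h in H
   ([bracket_xa]).  It is <-, b> (x) id applied to the identity
     S h_(1) c_(1) h_(2) (x) c_(2) = c_(1) (x) h_(1) c_(2) S h_(2)
   in H (x) H, which holds since both sides are contractions of
   S h_(1) (c h_(2))_(1) (x) (c h_(2))_(2) S h_(3) and c h_(2) = h_(2) c.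
   By coassociativity the action of A is a' |> x_a = x_(a a').  The stability
   of both spans and the four formulas follow from these two rules by
   linearity; for L_c one replaces x_(b_(2)) by x_(b_(2) - eps(b_(2)) 1), which
   only costs a multiple of eps(b) = 0. *)

From HB Require Import structures.
From mathcomp Require Import all_boot all_order all_algebra all_field.
Set Implicit Arguments. Unset Strict Implicit. Unset Printing Implicit Defensive.
Import GRing.Theory.
Local Open Scope ring_scope.

Section Linearity.
Variable K : fieldType.
Implicit Types V W U : lmodType K.

Lemma lin0 V U (f : V -> U) : lin f -> f 0 = 0.
Proof.
move=> f_lin; apply: (@addrI _ (f 0)).
have := f_lin 1 0 0; rewrite !scale1r addr0 => e.
by rewrite addr0 -e.
Qed.

Lemma linD V U (f : V -> U) : lin f -> forall u v, f (u + v) = f u + f v.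
Proof. by move=> f_lin u v; have := f_lin 1 u v; rewrite !scale1r. Qed.

Lemma linZ V U (f : V -> U) : lin f -> forall k u, f (k *: u) = k *: f u.
Proof. by move=> f_lin k u; have := f_lin k u 0; rewrite !addr0 (lin0 f_lin) addr0. Qed.

Lemma linN V U (f : V -> U) : lin f -> forall u, f (- u) = - f u.
Proof. by move=> f_lin u; rewrite -scaleN1r (linZ f_lin) scaleN1r. Qed.

Lemma linB V U (f : V -> U) : lin f -> forall u v, f (u - v) = f u - f v.
Proof. by move=> f_lin u v; rewrite (linD f_lin) (linN f_lin). Qed.

Lemma lin_sum V U (f : V -> U) I (s : seq I) (F : I -> V) : lin f ->
  f (\sum_(i <- s) F i) = \sum_(i <- s) f (F i).
Proof.
move=> f_lin; elim: s => [|i s IHs]; first by rewrite !big_nil (lin0 f_lin).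
by rewrite !big_cons (linD f_lin) IHs.
Qed.

Lemma lin_sumZ V U (f : V -> U) I (s : seq I) (r : I -> K) (F : I -> V) : lin f ->
  f (\sum_(i <- s) r i *: F i) = \sum_(i <- s) r i *: f (F i).
Proof. by move=> f_lin; rewrite (lin_sum _ _ f_lin); under eq_bigr do rewrite (linZ f_lin). Qed.

Lemma lin_idfun V : lin (fun x : V => x).
Proof. by []. Qed.

Lemma lin_comp V W U (f : V -> W) (g : W -> U) :
  lin f -> lin g -> lin (fun x => g (f x)).
Proof. by move=> f_lin g_lin k u v; rewrite f_lin g_lin. Qed.

Lemma lin_sub V U (f g : V -> U) : lin f -> lin g -> lin (fun x => f x - g x).
Proof. by move=> f_lin g_lin k u v; rewrite f_lin g_lin scalerBr addrACA opprD. Qed.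

Lemma lin_sum_fun V U I (s : seq I) (F : I -> V -> U) :
  (forall i, lin (F i)) -> lin (fun x => \sum_(i <- s) F i x).
Proof.
by move=> F_lin k u v; rewrite scaler_sumr -big_split; apply: eq_bigr => i _; apply: F_lin.
Qed.

Lemma lin_scale V U (r : K) (f : V -> U) : lin f -> lin (fun x => r *: f x).
Proof. by move=> f_lin k u v; rewrite f_lin scalerDr !scalerA mulrC. Qed.

Definition lin_form V (f : V -> K) := forall k u v, f (k *: u + v) = k * f u + f v.

Lemma lin_formZ V (f : V -> K) : lin_form f -> forall k u, f (k *: u) = k * f u.
Proof. exact: (@linZ V K^o f). Qed.

Lemma lin_formB V (f : V -> K) : lin_form f -> forall u v, f (u - v) = f u - f v.
Proof. exact: (@linB V K^o f). Qed.

Lemma lin_form_sum V (f : V -> K) I (s : seq I) (F : I -> V) : lin_form f ->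
  f (\sum_(i <- s) F i) = \sum_(i <- s) f (F i).
Proof. exact: (@lin_sum V K^o f). Qed.

Lemma lin_scalel V U (f : V -> K) (w : U) : lin_form f -> lin (fun x => f x *: w).
Proof. by move=> f_lin k u v; rewrite f_lin scalerDl scalerA. Qed.

End Linearity.

Section Span.
Variable K : fieldType.
Variables (H : algType K) (X : H -> Prop).

Lemma inspan_sum (I : eqType) (s : seq I) (r : I -> K) (F : I -> H) :
  (forall i, X (F i)) -> inspan X (\sum_(i <- s) r i *: F i).
Proof.
move=> XF; exists [seq (r i, F i) | i <- s]; split; last by rewrite big_map.
by move=> p /mapP [i _ ->]; exact: XF.
Qed.

Lemma inspan_gen (y : H) : X y -> inspan X y.
Proof.
move=> Xy; have := @inspan_sum unit [:: tt] (fun _ => 1) (fun _ => y) (fun _ => Xy).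
by rewrite big_seq1 scale1r.
Qed.

Lemma inspan_lincomb (k : K) (u v : H) : inspan X u -> inspan X v -> inspan X (k *: u + v).
Proof.
move=> [su [Xsu ->]] [sv [Xsv ->]].
exists ([seq (k * p.1, p.2) | p <- su] ++ sv); split.
  by move=> p; rewrite mem_cat => /orP [/mapP [q /Xsu Xq ->] //|]; exact: Xsv.
rewrite big_cat big_map scaler_sumr; congr (_ + _).
by apply: eq_bigr => p _; rewrite scalerA.
Qed.

Lemma inspan_image (L : H -> H) (x : H) : lin L ->
  (forall y, X y -> inspan X (L y)) -> inspan X x -> inspan X (L x).
Proof.
move=> L_lin XL [s [Xs ->]]; rewrite (lin_sumZ _ _ _ L_lin).
elim: s Xs => [|p s IHs] Xs; first by rewrite big_nil; exists [::]; rewrite big_nil.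
rewrite big_cons; apply: inspan_lincomb; first by apply/XL/Xs; rewrite mem_head.
by apply: IHs => q q_s; apply: Xs; rewrite in_cons q_s orbT.
Qed.

End Span.

Section HopfAlgebra.
Variable K : fieldType.
Variables (B : algType K) (hB : hopf_alg B).
Notation S := (ant hB).

Lemma lin_mull (y : B) : lin (fun x : B => x * y).
Proof. by move=> k u v; rewrite mulrDl scalerAl. Qed.

Lemma lin_mulr (x : B) : lin (fun y : B => x * y).
Proof. by move=> k u v; rewrite mulrDr scalerAr. Qed.

Lemma lin_mul3l (y z : B) : lin (fun x : B => x * y * z).
Proof. exact: lin_comp (lin_mull y) (lin_mull z). Qed.

Lemma lin_mul3m (x z : B) : lin (fun y : B => x * y * z).
Proof. exact: lin_comp (lin_mulr x) (lin_mull z). Qed.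

Lemma lin_cop_sum (U : lmodType K) (G : B -> B -> U) : bilin G ->
  lin (fun h => \sum_(p <- cop hB h) G p.1 p.2).
Proof.
move=> G_bilin k u v; rewrite (cop_lin hB k u v G_bilin) big_cat big_map scaler_sumr.
by congr (_ + _); apply: eq_bigr => p _; rewrite (linZ (G_bilin.1 _)).
Qed.

Lemma cop_sum_one (U : lmodType K) (G : B -> B -> U) : bilin G ->
  \sum_(p <- cop hB 1) G p.1 p.2 = G 1 1.
Proof. by move=> G_bilin; rewrite (cop_one hB G_bilin) big_seq1. Qed.

Lemma cop_sum_mul (U : lmodType K) (G : B -> B -> U) (u v : B) : bilin G ->
  \sum_(p <- cop hB (u * v)) G p.1 p.2 =
  \sum_(p <- cop hB u) \sum_(q <- cop hB v) G (p.1 * q.1) (p.2 * q.2).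
Proof. by move=> G_bilin; rewrite (cop_mul hB u v G_bilin) big_allpairs_dep. Qed.

Lemma cop_sum_coassoc (U : lmodType K) (T : B -> B -> B -> U) (h : B) : trilin T ->
  \sum_(p <- cop hB h) \sum_(q <- cop hB p.1) T q.1 q.2 p.2 =
  \sum_(p <- cop hB h) \sum_(q <- cop hB p.2) T p.1 q.1 q.2.
Proof. by move=> T_trilin; have := coassoc hB h T_trilin; rewrite !big_allpairs_dep. Qed.

Definition quadrilin (U : lmodType K) (F : B -> B -> B -> B -> U) :=
  [/\ forall b d e, lin (fun a => F a b d e), forall a d e, lin (fun b => F a b d e),
      forall a b e, lin (fun d => F a b d e) & forall a b d, lin (F a b d)].

Lemma cop_sum_coassoc4 (U : lmodType K) (F : B -> B -> B -> B -> U) (h : B) :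
  quadrilin F ->
  \sum_(p <- cop hB h) \sum_(q <- cop hB p.1) \sum_(s <- cop hB p.2) F q.1 q.2 s.1 s.2 =
  \sum_(p <- cop hB h) \sum_(q <- cop hB p.1) \sum_(t <- cop hB q.2) F q.1 t.1 t.2 p.2.
Proof.
case=> F1 F2 F3 F4.
rewrite (cop_sum_coassoc (T := fun x y z => \sum_(t <- cop hB z) F x y t.1 t.2)); last first.
  split; [|split] => [y z|x z|x y]; try exact: lin_sum_fun.
  by apply: lin_cop_sum; split.
rewrite (cop_sum_coassoc (T := fun x y z => \sum_(t <- cop hB y) F x t.1 t.2 z)); last first.
  split; [|split] => [y z|x z|x y]; try exact: lin_sum_fun.
  by apply: (lin_cop_sum (G := fun u v => F x u v z)); split.
by apply: eq_bigr => p _; rewrite (cop_sum_coassoc (T := F p.1)).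
Qed.

Lemma ant1 : S 1 = 1.
Proof.
have := ant_l hB 1; rewrite eps_one scale1r (cop_sum_one (G := fun x y => S x * y)).
  by rewrite mulr1.
by split=> [w|x]; [exact: lin_comp (ant_lin hB) (lin_mull w) | exact: lin_mulr].
Qed.

Lemma lin_bracketl (y : B) : lin (fun h => bracket hB h y).
Proof.
apply: (lin_cop_sum (G := fun u v => u * y * S v)).
by split=> [w|u]; [exact: lin_mul3l | exact: lin_comp (ant_lin hB) (lin_mulr _)].
Qed.

Lemma lin_bracketr (h : B) : lin (bracket hB h).
Proof. by apply: lin_sum_fun => p; exact: lin_mul3m. Qed.

Lemma bracket1l (y : B) : bracket hB 1 y = y.
Proof.
rewrite /bracket (cop_sum_one (G := fun u v => u * y * S v)) ?ant1 ?mul1r ?mulr1 //.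
by split=> [w|u]; [exact: lin_mul3l | exact: lin_comp (ant_lin hB) (lin_mulr _)].
Qed.

Lemma bracket1r (h : B) : bracket hB h 1 = (eps hB h)%:A.
Proof. by rewrite -(ant_r hB); apply: eq_bigr => p _; rewrite mulr1. Qed.

End HopfAlgebra.

Section CentralAdjoint.
Variable K : fieldType.
Variables (H : algType K) (hH : hopf_alg H) (c : H).
Hypothesis c_central : forall h : H, c * h = h * c.
Variables (U : lmodType K) (beta : H -> H -> U).
Hypothesis beta_bilin : bilin beta.
Notation S := (ant hH).

(* Summed along Delta^(3) h, [conj_cy] expands
   beta (S h_(1) (c h_(2))_(1)) ((c h_(2))_(2) S h_(3)); [conj_yc] is the same
   with h_(2) c in place of c h_(2). *)
Let conj_cy a b d e := \sum_(q <- cop hH c) beta (S a * q.1 * b) (q.2 * d * S e).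
Let conj_yc a b d e := \sum_(q <- cop hH c) beta (S a * b * q.1) (d * q.2 * S e).

Lemma quadrilin_conj_cy : quadrilin conj_cy.
Proof.
split=> *; apply: lin_sum_fun => q.
- exact: lin_comp (lin_comp (ant_lin hH) (lin_mul3l _ _)) (beta_bilin.1 _).
- exact: lin_comp (lin_mulr _) (beta_bilin.1 _).
- exact: lin_comp (lin_mul3m _ _) (beta_bilin.2 _).
- exact: lin_comp (lin_comp (ant_lin hH) (lin_mulr _)) (beta_bilin.2 _).
Qed.

Lemma quadrilin_conj_yc : quadrilin conj_yc.
Proof.
split=> *; apply: lin_sum_fun => q.
- exact: lin_comp (lin_comp (ant_lin hH) (lin_mul3l _ _)) (beta_bilin.1 _).
- exact: lin_comp (lin_mul3m _ _) (beta_bilin.1 _).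
- exact: lin_comp (lin_mul3l _ _) (beta_bilin.2 _).
- exact: lin_comp (lin_comp (ant_lin hH) (lin_mulr _)) (beta_bilin.2 _).
Qed.

Lemma conj_cy_yc a e (y : H) :
  \sum_(t <- cop hH y) conj_cy a t.1 t.2 e = \sum_(t <- cop hH y) conj_yc a t.1 t.2 e.
Proof.
pose G u v := beta (S a * u) (v * S e).
have G_bilin : bilin G.
  split=> [w|v]; first exact: lin_comp (lin_mulr _) (beta_bilin.1 _).
  exact: lin_comp (lin_mull _) (beta_bilin.2 _).
have := cop_sum_mul hH c y G_bilin; rewrite c_central (cop_sum_mul hH y c G_bilin) => cop_yc_cy.
rewrite /conj_cy /conj_yc exchange_big /=.
transitivity (\sum_(p <- cop hH c) \sum_(q <- cop hH y) G (p.1 * q.1) (p.2 * q.2)).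
  by apply: eq_bigr => p _; apply: eq_bigr => q _; rewrite /G !mulrA.
by rewrite -cop_yc_cy; apply: eq_bigr => p _; apply: eq_bigr => q _; rewrite /G !mulrA.
Qed.

Lemma contract_conj_cy h :
  \sum_(p <- cop hH h) \sum_(r <- cop hH p.1) \sum_(s <- cop hH p.2) conj_cy r.1 r.2 s.1 s.2 =
  \sum_(p <- cop hH h) \sum_(q <- cop hH c) beta (S p.1 * q.1 * p.2) q.2.
Proof.
pose G u v := \sum_(q <- cop hH c) beta (S u * q.1 * v) q.2.
have G_bilin : bilin G.
  split=> [w|v]; apply: lin_sum_fun => q.
    exact: lin_comp (lin_comp (ant_lin hH) (lin_mul3l _ _)) (beta_bilin.1 _).
  exact: lin_comp (lin_mulr _) (beta_bilin.1 _).
have contract r e : \sum_(s <- cop hH e) conj_cy r.1 r.2 s.1 s.2 = eps hH e *: G r.1 r.2.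
  rewrite /conj_cy exchange_big scaler_sumr; apply: eq_bigr => q _ /=.
  under eq_bigr do rewrite -[q.2 * _ * _]mulrA.
  rewrite -(lin_sum _ _ (beta_bilin.2 _)) -mulr_sumr (ant_r hH) mulr_algr.
  exact: (linZ (beta_bilin.2 _)).
rewrite (eq_bigr (fun p => \sum_(r <- cop hH p.1) eps hH p.2 *: G r.1 r.2)); last first.
  by move=> p _; apply: eq_bigr => r _; exact: contract.
have := lin_sumZ (cop hH h) (fun p => eps hH p.2) (fun p => p.1) (lin_cop_sum hH G_bilin).
rewrite /= (counit_r hH) => ->.
by apply: eq_bigr => p _; rewrite scaler_sumr.
Qed.

Lemma contract_conj_yc h :
  \sum_(p <- cop hH h) \sum_(r <- cop hH p.1) \sum_(s <- cop hH p.2) conj_yc r.1 r.2 s.1 s.2 =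
  \sum_(p <- cop hH h) \sum_(q <- cop hH c) beta q.1 (p.1 * q.2 * S p.2).
Proof.
pose G u v := \sum_(q <- cop hH c) beta q.1 (u * q.2 * S v).
have G_bilin : bilin G.
  split=> [w|v]; apply: lin_sum_fun => q.
    exact: lin_comp (lin_mul3l _ _) (beta_bilin.2 _).
  exact: lin_comp (lin_comp (ant_lin hH) (lin_mulr _)) (beta_bilin.2 _).
have contract e s : \sum_(r <- cop hH e) conj_yc r.1 r.2 s.1 s.2 = eps hH e *: G s.1 s.2.
  rewrite /conj_yc exchange_big scaler_sumr; apply: eq_bigr => q _ /=.
  rewrite -(lin_sum _ _ (beta_bilin.1 _)) -mulr_suml (ant_l hH) mulr_algl.
  exact: (linZ (beta_bilin.1 _)).
rewrite (eq_bigr (fun p => \sum_(s <- cop hH p.2) eps hH p.1 *: G s.1 s.2)); last first.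
  by move=> p _; rewrite exchange_big; apply: eq_bigr => s _; exact: contract.
have := lin_sumZ (cop hH h) (fun p => eps hH p.1) (fun p => p.2) (lin_cop_sum hH G_bilin).
rewrite /= (counit_l hH) => ->.
by apply: eq_bigr => p _; rewrite scaler_sumr.
Qed.

Lemma cop_sum_adjoint_central h :
  \sum_(p <- cop hH h) \sum_(q <- cop hH c) beta (S p.1 * q.1 * p.2) q.2 =
  \sum_(p <- cop hH h) \sum_(q <- cop hH c) beta q.1 (p.1 * q.2 * S p.2).
Proof.
rewrite -contract_conj_cy -contract_conj_yc.
rewrite (cop_sum_coassoc4 _ _ quadrilin_conj_cy) (cop_sum_coassoc4 _ _ quadrilin_conj_yc).
by apply: eq_bigr => p _; apply: eq_bigr => q _; exact: conj_cy_yc.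
Qed.

End CentralAdjoint.

Section Pairing.
Variable K : fieldType.
Variables (H A : algType K) (hH : hopf_alg H) (hA : hopf_alg A).
Variable P : hopf_pairing hH hA.
Notation pr := (pair P).
Notation SH := (ant hH).
Notation SA := (ant hA).

Lemma lin_form_pairl (a : A) : lin_form (pr^~ a).
Proof. by move=> k u v; rewrite pair_linl. Qed.

Lemma lin_form_pairr (h : H) : lin_form (pr h).
Proof. by move=> k u v; rewrite pair_linr. Qed.

Lemma bilin_pair_scale (a : A) : bilin (fun u v : H => pr u a *: v).
Proof.
split=> [w|u]; first exact: lin_scalel (lin_form_pairl a).
by move=> k v w; rewrite scalerDr !scalerA mulrC.
Qed.

Lemma lin_actA (a : A) : lin (actA P a).
Proof.
exact: lin_sub (lin_cop_sum hH (bilin_pair_scale a)) (lin_scalel _ (lin_form_pairl a)).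
Qed.

Lemma pair_mul3 (x y z : H) (b : A) :
  pr (x * y * z) b = \sum_(t <- cop2 hA b) pr x t.1.1 * pr y t.1.2 * pr z t.2.
Proof.
rewrite pair_mull /cop2 big_allpairs_dep; apply: eq_bigr => p _.
by rewrite pair_mull mulr_suml.
Qed.

Lemma pair_adjoint (h y : H) (b : A) :
  \sum_(p <- cop hH h) pr (SH p.1 * y * p.2) b =
  \sum_(t <- cop2 hA b) pr h (SA t.1.1 * t.2) * pr y t.1.2.
Proof.
under eq_bigr do rewrite pair_mul3.
rewrite exchange_big; apply: eq_bigr => t _.
rewrite pair_mulr mulr_suml; apply: eq_bigr => p _.
by rewrite pair_ant mulrAC.
Qed.

Lemma pair_adjoint_central (h y : H) (b : A) : (forall g : H, y * g = g * y) ->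
  \sum_(t <- cop2 hA b) pr h (SA t.1.1 * t.2) * pr y t.1.2 = eps hH h * pr y b.
Proof.
move=> y_central; rewrite -pair_adjoint.
under eq_bigr do rewrite -mulrA y_central mulrA.
rewrite -(lin_form_sum _ _ (lin_form_pairl b)) -mulr_suml (ant_l hH) mulr_algl.
exact: (lin_formZ (lin_form_pairl b)).
Qed.

Lemma pair_ant_counit (h : H) (b : A) :
  \sum_(t <- cop2 hA b) pr h (SA t.1.1 * t.2) * eps hA t.1.2 = eps hH h * eps hA b.
Proof.
rewrite -(pair_onel P b) -(pair_adjoint_central h b (y := 1)) => [|g]; last by rewrite mul1r mulr1.
by apply: eq_bigr => t _; rewrite pair_onel.
Qed.

Lemma cop_sum_pair_mul (U : lmodType K) (M : H -> U) (h : H) (a d : A) : lin M ->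
  \sum_(q <- cop hH h) pr q.1 a *: \sum_(r <- cop hH q.2) pr r.1 d *: M r.2 =
  \sum_(q <- cop hH h) pr q.1 (a * d) *: M q.2.
Proof.
move=> M_lin; under eq_bigr do rewrite scaler_sumr.
rewrite -(cop_sum_coassoc hH (T := fun x y z => pr x a *: (pr y d *: M z))).
  apply: eq_bigr => q _; rewrite pair_mulr scaler_suml.
  by under eq_bigr do rewrite scalerA.
split; [|split] => [y z|x z|x y].
- exact: lin_scalel (lin_form_pairl a).
- exact: lin_scale (lin_scalel _ (lin_form_pairl d)).
- exact: lin_scale (lin_scale _ M_lin).
Qed.

End Pairing.

Section CentralElement.
Variable K : fieldType.
Variables (H A : algType K) (hH : hopf_alg H) (hA : hopf_alg A).
Variables (P : hopf_pairing hH hA) (c : H).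
Hypothesis c_central : forall h : H, c * h = h * c.
Notation pr := (pair P).
Notation SA := (ant hA).
Notation x_ := (xa P c).

Lemma pair_xa (a d : A) : pr (x_ a) d = pr c (a * d) - pr c a * eps hA d.
Proof.
rewrite /xa (lin_formB (lin_form_pairl P d)) (lin_form_sum _ _ (lin_form_pairl P d)).
rewrite (lin_formZ (lin_form_pairl P d)) pair_onel pair_mulr; congr (_ - _).
by apply: eq_bigr => q _; rewrite (lin_formZ (lin_form_pairl P d)).
Qed.

Lemma lin_xa : lin x_.
Proof.
apply: lin_sub; last exact: lin_scalel (lin_form_pairr P c).
by apply: lin_sum_fun => q; exact: lin_scalel (lin_form_pairr P q.1).
Qed.

Lemma cop_sum_xa (U : lmodType K) (G : H -> H -> U) (a : A) : bilin G ->
  \sum_(p <- cop hH (x_ a)) G p.1 p.2 =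
  \sum_(q <- cop hH c) pr q.1 a *: \sum_(r <- cop hH q.2) G r.1 r.2 - pr c a *: G 1 1.
Proof.
move=> G_bilin; have cop_G_lin := lin_cop_sum hH G_bilin.
by rewrite (linB cop_G_lin) (lin_sumZ _ _ _ cop_G_lin) (linZ cop_G_lin) /= cop_sum_one.
Qed.

Lemma bracket_xa (h : H) (b : A) :
  bracket hH h (x_ b) = \sum_(t <- cop2 hA b) pr h (SA t.1.1 * t.2) *: x_ t.1.2.
Proof.
have bracket_h_lin := lin_bracketr hH h.
rewrite (linB bracket_h_lin) (lin_sumZ _ _ _ bracket_h_lin) (linZ bracket_h_lin) bracket1r.
transitivity (\sum_(t <- cop2 hA b) pr h (SA t.1.1 * t.2) *: \sum_(q <- cop hH c) pr q.1 t.1.2 *: q.2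
   - (\sum_(t <- cop2 hA b) pr h (SA t.1.1 * t.2) * pr c t.1.2) *: 1); last first.
  by rewrite scaler_suml -sumrB; apply: eq_bigr => t _; rewrite scalerBr scalerA.
rewrite pair_adjoint_central // scalerA mulrC; congr (_ - _).
transitivity (\sum_(p <- cop hH h) \sum_(q <- cop hH c) pr q.1 b *: (p.1 * q.2 * ant hH p.2)).
  by rewrite exchange_big; apply: eq_bigr => q _; rewrite /bracket scaler_sumr.
rewrite -(cop_sum_adjoint_central hH c_central (bilin_pair_scale P b)) exchange_big /=.
under eq_bigr do rewrite -scaler_suml pair_adjoint scaler_suml.
rewrite exchange_big; apply: eq_bigr => t _; rewrite scaler_sumr.
by apply: eq_bigr => q _; rewrite scalerA.
Qed.

Lemma xa_counit (b : A) : \sum_(t <- cop2 hA b) eps hA (SA t.1.1 * t.2) *: x_ t.1.2 = x_ b.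
Proof. by rewrite -[RHS](bracket1l hH) bracket_xa; apply: eq_bigr => t _; rewrite pair_onel. Qed.

Lemma actA_xa (d a : A) : actA P d (x_ a) = x_ (a * d).
Proof.
rewrite /actA (cop_sum_xa _ (bilin_pair_scale P d)) (cop_sum_pair_mul _ _ _ _ (@lin_idfun _ _)).
rewrite pair_onel pair_xa -addrA; congr (_ + _).
by rewrite scalerA scalerBl opprB addKr.
Qed.

Lemma dpart_xa (a b : A) :
  dpart P (x_ a) b = \sum_(p <- cop hA b) pr c (a * p.1) *: p.2 - pr c a *: b.
Proof.
rewrite /dpart; under eq_bigr do rewrite pair_xa scalerBl -scalerA.
by rewrite sumrB -scaler_sumr (counit_l hA).
Qed.

Lemma PsiInv_xa (a b : A) :
  teq2 (PsiInv P b (x_ a)) [seq (x_ (a * p.1), p.2) | p <- cop hA b].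
Proof. by move=> U beta _; rewrite !big_map; apply: eq_bigr => p _; rewrite actA_xa. Qed.

Lemma bracket_xa_xa (a b : A) : bracket hH (x_ a) (x_ b) =
  \sum_(t <- cop2 hA b) pr c (a * SA t.1.1 * t.2) *: x_ t.1.2 - pr c a *: x_ b.
Proof.
rewrite bracket_xa; under eq_bigr do rewrite pair_xa scalerBl -scalerA mulrA.
by rewrite sumrB -scaler_sumr xa_counit.
Qed.

Lemma cop_sum_bracket_xa (U : lmodType K) (beta : H -> H -> U) (a b : A) : bilin beta ->
  \sum_(p <- cop hH (x_ a)) beta (bracket hH p.1 (x_ b)) p.2 =
  \sum_(t <- cop2 hA b) beta (x_ t.1.2) (x_ (a * SA t.1.1 * t.2))
  + \sum_(t <- cop2 hA b) pr c (a * SA t.1.1 * t.2) *: beta (x_ t.1.2) 1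
  - pr c a *: beta (x_ b) 1.
Proof.
move=> beta_bilin.
have G_bilin : bilin (fun u v => beta (bracket hH u (x_ b)) v).
  by split=> [w|v]; [exact: lin_comp (lin_bracketl hH _) (beta_bilin.1 _) | exact: beta_bilin.2].
rewrite (cop_sum_xa _ G_bilin) bracket1l; congr (_ - _).
transitivity (\sum_(t <- cop2 hA b) \sum_(q <- cop hH c)
   pr q.1 a *: \sum_(r <- cop hH q.2) pr r.1 (SA t.1.1 * t.2) *: beta (x_ t.1.2) r.2).
  rewrite exchange_big; apply: eq_bigr => q _; rewrite -scaler_sumr; congr (_ *: _).
  rewrite exchange_big; apply: eq_bigr => r _.
  by rewrite bracket_xa (lin_sumZ _ _ _ (beta_bilin.1 _)).
rewrite -big_split; apply: eq_bigr => t _ /=.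
rewrite (cop_sum_pair_mul _ _ _ _ (beta_bilin.2 _)) -(lin_sumZ _ _ _ (beta_bilin.2 _)).
by rewrite -(linZ (beta_bilin.2 _)) -(linD (beta_bilin.2 _)) /xa subrK mulrA.
Qed.

Lemma Psi_xa (a b : A) : teq2 (Psi hH (x_ a) (x_ b))
  [seq (x_ t.1.2, x_ (a * SA t.1.1 * t.2)) | t <- cop2 hA b].
Proof.
move=> U beta beta_bilin; have beta_l_lin := beta_bilin.1 1.
rewrite /Psi big_cat big_map big_seq1 big_map /= cop_sum_bracket_xa // bracket_xa_xa.
move: (x_ b) => xb.
rewrite (linN beta_l_lin) (linB beta_l_lin) (linZ beta_l_lin) (lin_sumZ _ _ _ beta_l_lin).
by rewrite opprB addrA subrK addrK.
Qed.

Lemma bracket_xa_ker_eps (h : H) (b : A) : eps hA b = 0 ->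
  bracket hH h (x_ b) =
  \sum_(t <- cop2 hA b) pr h (SA t.1.1 * t.2) *: x_ (t.1.2 - eps hA t.1.2 *: 1).
Proof.
move=> b_eps0; rewrite bracket_xa; symmetry.
under eq_bigr do rewrite (linB lin_xa) (linZ lin_xa) scalerBr scalerA.
by rewrite sumrB -scaler_suml pair_ant_counit b_eps0 mulr0 scale0r subr0.
Qed.

Lemma Ltilde_qd_stable : qd_stable P (Ltilde P c).
Proof.
move=> x x_in; split=> [h|d].
  apply: inspan_image (lin_bracketr hH h) _ x_in => _ [a ->].
  by rewrite bracket_xa; apply: inspan_sum => t; exists t.1.2.
apply: inspan_image (lin_actA P d) _ x_in => _ [a ->].
by rewrite actA_xa; apply: inspan_gen; exists (a * d).
Qed.

Lemma Lc_qd_stable : qd_stable P (Lc P c).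
Proof.
move=> x x_in; split=> [h|d].
  apply: inspan_image (lin_bracketr hH h) _ x_in => _ [a [a_eps0 ->]].
  rewrite bracket_xa_ker_eps //; apply: inspan_sum => t.
  exists (t.1.2 - eps hA t.1.2 *: 1); split=> //.
  by rewrite (lin_formB (eps_lin hA)) (lin_formZ (eps_lin hA)) eps_one mulr1 subrr.
apply: inspan_image (lin_actA P d) _ x_in => _ [a [a_eps0 ->]].
by rewrite actA_xa; apply: inspan_gen; exists (a * d); rewrite eps_mul a_eps0 mul0r.
Qed.

End CentralElement.

Theorem proposition2p6 (H A : algType algC) (hH : hopf_alg H) (hA : hopf_alg A)
  (P : hopf_pairing hH hA) (c : H) :
  (forall h : H, c * h = h * c) ->
  ~ (exists k : algC, c = k%:A) ->
  qd_stable P (Ltilde P c) /\ qd_stable P (Lc P c) /\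
  (forall a b : A,
     dpart P (xa P c a) b =
       \sum_(p <- cop hA b) pair P c (a * p.1) *: p.2 - pair P c a *: b
  /\ teq2 (PsiInv P b (xa P c a)) [seq (xa P c (a * p.1), p.2) | p <- cop hA b]
  /\ bracket hH (xa P c a) (xa P c b) =
       \sum_(t <- cop2 hA b) pair P c (a * ant hA t.1.1 * t.2) *: xa P c t.1.2
       - pair P c a *: xa P c b
  /\ teq2 (Psi hH (xa P c a) (xa P c b))
          [seq (xa P c t.1.2, xa P c (a * ant hA t.1.1 * t.2)) | t <- cop2 hA b]).
Proof.
move=> c_central _.  (* c need not be non-trivial *)
split; first exact: Ltilde_qd_stable.
split; first exact: Lc_qd_stable.
move=> a b; split; first exact: dpart_xa.
split; first exact: PsiInv_xa.
by split; [exact: bracket_xa_xa | exact: Psi_xa].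
Qed.
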